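(* Let $p$ be a prime and $n,r\geq 0$ integers. Then $B_{n+p^r,-r}\equiv B_{n,-r+1}\pmod p$.
   Context: For any integer $s\in\mathbb{Z}$, the $s$-Bell numbers $B_{n,s}$ ($n\geq0$) are defined by $\sum_{n\geq0}B_{n,s}\frac{t^n}{n!}=e^{e^t-1+st}$. *)

(* s-Bell numbers via their exponential generating function,
   computed with formal power series truncated (as polynomials over rat). *)
From mathcomp Require Import all_boot all_algebra.
Set Implicit Arguments. Unset Strict Implicit. Unset Printing Implicit Defensive.
Import GRing.Theory Num.Theory.
Local Open Scope ring_scope.

Definition expm1_trunc (n : nat) : {poly rat} :=
  \sum_(1 <= j < n.+1) ((j`!)%:R^-1 : rat) *: 'X^j.

(* exp(f) = \sum_k f^k / k!, truncated; for f with zero constant term its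
   coefficients of degree <= n are exact. *)
Definition exp_trunc (n : nat) (f : {poly rat}) : {poly rat} :=
  \sum_(k < n.+1) ((k`!)%:R^-1 : rat) *: f ^+ k.

Definition sBell (n : nat) (s : int) : rat :=
  (n`!)%:R * (exp_trunc n (expm1_trunc n + (s%:~R : rat) *: 'X))`_n.

(* Let L be the linear functional on polynomials sending X^k to the Bell number
   B_k.  The Bell recurrence says L(X q) = L(q(X + 1)), and B_{n,s} = L((X + s)^n)
   because both satisfy the s-Bell recurrence obtained by differentiating the
   generating function.  Iterating the shift rule gives
   L(X(X - 1)...(X - k + 1) q) = L(q(X + k)); over F_p the falling factorial of
   length p is X^p - X and q(X + p) = q, so L vanishes on all multiples of
   X^p - X - 1 (Touchard's congruence).  Modulo X^p - X - 1 the Frobenius gives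
   X^(p^m) = X + m, hence (X - r)^(p^r) = X and
   B_{n+p^r,-r} = L((X - r)^n X) = L((X - r + 1)^n) = B_{n,-r+1} in F_p. *)

From HB Require Import structures.
From mathcomp Require Import all_boot all_algebra all_field.
From mathcomp Require Import ring.
Set Implicit Arguments. Unset Strict Implicit. Unset Printing Implicit Defensive.
Import GRing.Theory Num.Theory.
Local Open Scope ring_scope.

Fixpoint bell_seq (n : nat) : seq nat :=
  if n is m.+1 then
    rcons (bell_seq m) (\sum_(j < m.+1) nth 0 (bell_seq m) (m - j) * 'C(m, j))%N
  else [:: 1%N].

Definition bell (n : nat) : nat := nth 0 (bell_seq n) n.

Lemma size_bell_seq n : size (bell_seq n) = n.+1.
Proof. by elim: n => //= n IHn; rewrite size_rcons IHn. Qed.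

Lemma nth_bell_seq n i : (i <= n)%N -> nth 0 (bell_seq n) i = bell i.
Proof.
elim: n => [|n IHn]; first by rewrite leqn0 => /eqP ->.
rewrite leq_eqVlt => /predU1P [-> //|lt_in].
by rewrite /= nth_rcons size_bell_seq lt_in IHn.
Qed.

Lemma bellS n : bell n.+1 = (\sum_(j < n.+1) bell (n - j) * 'C(n, j))%N.
Proof.
rewrite /bell /= nth_rcons size_bell_seq ltnn eqxx.
by apply: eq_bigr => j _; rewrite nth_bell_seq // leq_subr.
Qed.

Section Umbral.
Variable R : comNzRingType.

Definition umbral (q : {poly R}) : R := \sum_(i < size q) q`_i * (bell i)%:R.

Lemma umbralE n (q : {poly R}) :
  (size q <= n)%N -> umbral q = \sum_(i < n) q`_i * (bell i)%:R.
Proof.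
move=> le_qn; rewrite /umbral (big_ord_widen n (fun i => q`_i * (bell i)%:R) le_qn).
rewrite [RHS](bigID (fun i : 'I_n => (i < size q)%N)) /= [X in _ = _ + X]big1 ?addr0 //.
by move=> i; rewrite -leqNgt => /(nth_default 0) ->; rewrite mul0r.
Qed.

Lemma umbral_is_linear : linear_for *%R umbral.
Proof.
move=> a u v; set n := maxn (size u) (size v).
have le_un : (size u <= n)%N by rewrite leq_maxl.
have le_vn : (size v <= n)%N by rewrite leq_maxr.
have le_auvn : (size (a *: u + v)%R <= n)%N.
  rewrite (leq_trans (size_polyD _ _)) // geq_max le_vn andbT.
  exact: leq_trans (size_scale_leq _ _) le_un.
rewrite !(@umbralE n) // mulr_sumr -big_split; apply: eq_bigr => i _.
by rewrite coefD coefZ mulrDl mulrA.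
Qed.

HB.instance Definition _ :=
  GRing.isLinear.Build R {poly R} R *%R umbral umbral_is_linear.

Lemma umbralXn k : umbral 'X^k = (bell k)%:R.
Proof.
rewrite (@umbralE k.+1) ?size_polyXn // big_ord_recr /= coefXn eqxx mul1r.
by rewrite big1 ?add0r // => i _; rewrite coefXn ltn_eqF ?mul0r.
Qed.

Lemma umbral_mulX q : umbral ('X * q) = umbral (q \Po ('X + 1)).
Proof.
rewrite -[q]coefK poly_def mulr_sumr !raddf_sum /=.
apply: eq_bigr => i _; rewrite -scalerAr comp_polyZ !linearZ /=; congr (_ * _).
rewrite -exprS umbralXn bellS natr_sum rmorphXn /= comp_polyX exprDn raddf_sum /=.
by apply: eq_bigr => j _; rewrite expr1n mulr1 raddfMn /= umbralXn natrM mulr_natr.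
Qed.

Definition falling_poly (k : nat) : {poly R} := \prod_(i < k) ('X - i%:R%:P).

Lemma falling_polyS k : falling_poly k.+1 = 'X * (falling_poly k \Po ('X - 1)).
Proof.
rewrite /falling_poly big_ord_recl subr0 rmorph_prod; congr (_ * _).
apply: eq_bigr => i _; rewrite /= rmorphB /= comp_polyX comp_polyC /bump /=.
by rewrite natrD rmorphD /= polyC1 opprD addrA.
Qed.

Lemma umbral_mul_falling k q :
  umbral (falling_poly k * q) = umbral (q \Po ('X + k%:R%:P)).
Proof.
elim: k q => [|k IHk] q; first by rewrite /falling_poly big_ord0 mul1r addr0 comp_polyXr.
rewrite falling_polyS -mulrA umbral_mulX comp_polyM -comp_polyA.
rewrite comp_polyB comp_polyX comp_polyC addrK comp_polyXr IHk -comp_polyA.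
by rewrite comp_polyD comp_polyX comp_polyC -addrA -rmorphD /= -mulrSr.
Qed.

Definition sbell (c : R) (m : nat) : R := umbral (('X + c%:P) ^+ m).

Lemma sbell0 c : sbell c 0 = 1.
Proof. by rewrite /sbell expr0 -(expr0 'X) umbralXn. Qed.

Lemma sbellS c n :
  sbell c n.+1 = \sum_(j < n.+1) sbell c (n - j) *+ 'C(n, j) + c * sbell c n.
Proof.
rewrite /sbell exprS mulrDl raddfD /= mul_polyC linearZ umbral_mulX; congr (_ + _).
rewrite rmorphXn rmorphD /= comp_polyX comp_polyC addrAC exprDn raddf_sum /=.
by apply: eq_bigr => j _; rewrite expr1n mulr1 raddfMn.
Qed.

End Umbral.

Lemma rmorph_umbral (R S : comNzRingType) (f : {rmorphism R -> S}) (q : {poly R}) :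
  f (umbral q) = umbral (map_poly f q).
Proof.
rewrite [RHS](@umbralE _ (size q)) ?size_poly // rmorph_sum.
by apply: eq_bigr => i _; rewrite rmorphM rmorph_nat coef_map.
Qed.

Lemma rmorph_sbell (R S : comNzRingType) (f : {rmorphism R -> S}) c m :
  f (sbell c m) = sbell (f c) m.
Proof. by rewrite /sbell rmorph_umbral rmorphXn /= map_polyXaddC. Qed.

Section TouchardCongruence.
Variable p : nat.
Hypothesis p_pr : prime p.

Lemma falling_poly_Fp : falling_poly 'F_p p = 'X^p - 'X.
Proof.
have := finField_genPoly 'F_p; rewrite card_Fp // => ->.
set s := [seq (i%:R : 'F_p) | i <- iota 0 p].
have s_uniq : uniq s.
  rewrite map_inj_in_uniq ?iota_uniq // => i j.
  rewrite !mem_iota /= !add0n => ltip ltjp eqij.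
  by have := val_Fp_nat p_pr i; rewrite eqij val_Fp_nat // !modn_small.
have s_full x : x \in s.
  apply/mapP; exists (val x); last by rewrite natr_Zp.
  by rewrite mem_iota /= add0n -{2}(Fp_cast p_pr) ltn_ord.
rewrite -(eq_bigl _ _ s_full) -big_uniq // big_map.
rewrite /falling_poly -(big_mkord xpredT (fun i => 'X - (i%:R : 'F_p)%:P)).
by rewrite /index_iota subn0.
Qed.

Definition touchard_poly : {poly 'F_p} := 'X^p - 'X - 1.

Lemma umbral_mul_touchard q : umbral (q * touchard_poly) = 0.
Proof.
have := umbral_mul_falling p q; rewrite falling_poly_Fp pchar_Fp_0 // addr0 comp_polyXr.
by rewrite /touchard_poly mulrBr mulr1 mulrC raddfB /= => ->; rewrite subrr.
Qed.

Lemma umbral_dvd_touchard q : touchard_poly %| q -> umbral q = 0.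
Proof. by case/dvdpP => d ->; apply: umbral_mul_touchard. Qed.

Lemma pchar_poly_Fp : p \in [pchar {poly 'F_p}].
Proof. by rewrite pchar_poly pchar_Fp. Qed.

Lemma touchard_dvd_Xpexp m : touchard_poly %| 'X^(p ^ m) - ('X + m%:R).
Proof.
elim: m => [|m IHm]; first by rewrite expn0 expr1 addr0 subrr dvdp0.
have -> : 'X^(p ^ m.+1) - ('X + m.+1%:R) =
          ('X^(p ^ m) - ('X + m%:R)) ^+ p + touchard_poly.
  rewrite -(pFrobenius_autE pchar_poly_Fp) rmorphB rmorphD rmorph_nat.
  rewrite /= !pFrobenius_autE -exprM -expnSr /touchard_poly mulrSr; ring.
apply: dvdp_add (dvdpp _).
exact: dvdp_exp (prime_gt0 p_pr) IHm.
Qed.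

Lemma Fp_fermat (x : 'F_p) m : x ^+ (p ^ m) = x.
Proof.
elim: m => [|m IHm]; first by rewrite expn0 expr1.
by rewrite expnSr exprM IHm; have := expf_card x; rewrite card_Fp.
Qed.

Lemma touchard_dvd_XaddC_pexp (c : 'F_p) m :
  touchard_poly %| ('X + c%:P) ^+ (p ^ m) - ('X + (c + m%:R)%:P).
Proof.
have pchar_pexp : [pchar {poly 'F_p}].-nat (p ^ m)%N.
  by rewrite (eq_pnat _ (pcharf_eq pchar_poly_Fp)) pnatX pnat_id.
rewrite exprDn_pchar // -rmorphXn /= Fp_fermat rmorphD /=.
have -> : 'X^(p ^ m) + c%:P - ('X + (c%:P + (m%:R)%:P)) = 'X^(p ^ m) - ('X + m%:R).
  by rewrite polyC_natr; ring.
exact: touchard_dvd_Xpexp.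
Qed.

Lemma umbral_mul_XaddC_pexp q (c : 'F_p) m :
  umbral (q * ('X + c%:P) ^+ (p ^ m)) = umbral (q * ('X + (c + m%:R)%:P)).
Proof.
apply/eqP; rewrite -subr_eq0 -raddfB -mulrBr; apply/eqP/umbral_dvd_touchard.
exact/dvdp_mull/touchard_dvd_XaddC_pexp.
Qed.

Lemma sbellD_pexp (c : 'F_p) n m :
  sbell c (n + p ^ m) = sbell (c + 1) n + (c + m%:R) * sbell c n.
Proof.
rewrite /sbell exprD umbral_mul_XaddC_pexp mulrDr raddfD /= [_ * 'X]mulrC.
rewrite umbral_mulX [_ * _%:P]mulrC mul_polyC linearZ /=; congr (umbral _ + _).
by rewrite rmorphXn rmorphD /= comp_polyX comp_polyC polyCD polyC1 addrA addrAC.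
Qed.

End TouchardCongruence.

Lemma inv_factS_mulrn j : ((j.+1)`!%:R : rat)^-1 *+ j.+1 = (j`!%:R)^-1.
Proof.
by rewrite factS natrM invfM -mulrnAl -[_^-1 *+ _]mulr_natr mulVf ?mul1r // pnatr_eq0.
Qed.

Lemma deriv_exp_trunc n (f : {poly rat}) :
  (exp_trunc n f)^`() = f^`() * (exp_trunc n f - (n`!%:R)^-1 *: f ^+ n).
Proof.
rewrite /exp_trunc [in RHS]big_ord_recr /= addrK raddf_sum /= big_ord_recl /=.
rewrite derivZ expr0 derivC scaler0 add0r mulr_sumr; apply: eq_bigr => j _.
rewrite derivZ deriv_exp /= /bump /= add1n.
by rewrite -scalerMnr scalerMnl inv_factS_mulrn scalerAr.
Qed.

Lemma expm1_truncE N : expm1_trunc N = 'X * \poly_(j < N) ((j.+1)`!%:R)^-1.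
Proof.
rewrite /expm1_trunc poly_def big_add1 /= big_mkord mulr_sumr.
by apply: eq_bigr => j _; rewrite exprS scalerAr.
Qed.

Section ExponentialGeneratingFunction.
Variables (N : nat) (c : rat).

Definition egf_arg : {poly rat} := expm1_trunc N + c *: 'X.

Definition egf_coef (m : nat) : rat := m`!%:R * (exp_trunc N egf_arg)`_m.

Lemma egf_argE : egf_arg = 'X * (\poly_(j < N) ((j.+1)`!%:R)^-1 + c%:P).
Proof. by rewrite /egf_arg expm1_truncE mulrDr -mul_polyC [c%:P * _]mulrC. Qed.

Lemma coef_egf_arg_exp k i : (i < k)%N -> (egf_arg ^+ k)`_i = 0.
Proof. by move=> lt_ik; rewrite egf_argE exprMn coefXnM lt_ik. Qed.

Lemma coef_deriv_egf_arg i :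
  (i < N)%N -> egf_arg^`()`_i = (i`!%:R)^-1 + (if i == 0%N then c else 0).
Proof.
move=> lt_iN; rewrite coef_deriv egf_argE coefXM /= coefD coef_poly lt_iN coefC.
rewrite mulrnDl inv_factS_mulrn.
by case: i {lt_iN} => [|i]; rewrite ?mulr1n ?mul0rn.
Qed.

Lemma egf_coef0 : egf_coef 0 = 1.
Proof.
rewrite /egf_coef /exp_trunc mul1r coef_sum big_ord_recl /= expr0 coefZ coef1 /=.
rewrite invr1 mulr1 big1 ?addr0 // => j _.
by rewrite coefZ coef_egf_arg_exp ?mulr0.
Qed.

Lemma egf_coefS n : (n < N)%N ->
  egf_coef n.+1 = \sum_(j < n.+1) egf_coef (n - j) *+ 'C(n, j) + c * egf_coef n.
Proof.
move=> lt_nN; set F := exp_trunc N egf_arg.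
have coefF_S : F`_n.+1 *+ n.+1 = \sum_(j < n.+1) egf_arg^`()`_j * F`_(n - j).
  rewrite -coef_deriv deriv_exp_trunc mulrBr coefB -scalerAr coefZ [X in _ - _ * X]coefM.
  rewrite [X in _ - _ * X]big1 ?mulr0 ?subr0 ?coefM // => j _.
  by rewrite coef_egf_arg_exp ?mulr0 // (leq_ltn_trans (leq_subr j n)).
rewrite {1}/egf_coef factS natrM [_ * n`!%:R]mulrC -mulrA (mulr_natl _ n.+1) -/F coefF_S.
rewrite mulr_sumr (eq_bigr (fun j : 'I_n.+1 => egf_coef (n - j) *+ 'C(n, j) +
    (if j == 0%N :> nat then c * egf_coef n else 0))); last first.
  move=> j _; have le_jn : (j <= n)%N by rewrite -ltnS.
  rewrite coef_deriv_egf_arg ?(leq_ltn_trans le_jn) // mulrDl mulrDr.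
  congr (_ + _); last by case: eqP => [->|_]; rewrite ?subn0 ?mul0r ?mulr0 // mulrCA.
  rewrite /egf_coef -(bin_fact le_jn) !natrM mulrA mulrAC -!mulrA.
  by rewrite mulVKf ?pnatr_eq0 -?lt0n ?fact_gt0 // mulr_natl mulrC !mulr_natr.
by rewrite big_split /= [X in _ + X]big_ord_recl big1_eq addr0.
Qed.

End ExponentialGeneratingFunction.

Lemma sBell_sbell m (s : int) : sBell m s = (sbell s m)%:~R.
Proof.
rewrite (rmorph_sbell (intr : int -> rat)).
suff egf_sbell k : (k <= m)%N -> egf_coef m s%:~R k = sbell (s%:~R : rat) k.
  exact: egf_sbell.
elim/ltn_ind: k => -[|k] IHk le_km; first by rewrite egf_coef0 sbell0.
rewrite egf_coefS // sbellS; congr (_ + _ * _); last exact: IHk (ltnW le_km).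
apply: eq_bigr => j _; rewrite IHk ?ltnS ?leq_subr //.
exact: leq_trans (leq_subr _ _) (ltnW le_km).
Qed.

Theorem proposition1 (p n r : nat) (hp : prime p) :
  exists k : int,
    sBell (n + p ^ r) (- (r%:Z)) - sBell n (- (r%:Z) + 1) = ((p%:Z * k)%:~R : rat).
Proof.
set z := sbell (- r%:Z) (n + p ^ r) - sbell (- r%:Z + 1) n.
have z_Fp : (z%:~R : 'F_p) = 0.
  rewrite rmorphB /= !rmorph_sbell rmorphD rmorphN /= rmorph1 sbellD_pexp //.
  by rewrite pmulrn addNr mul0r addr0 subrr.
have /dvdzP [k z_pk] : (p%:Z %| z)%Z by rewrite (dvdz_pcharf (pchar_Fp hp)) z_Fp.
by exists k; rewrite !sBell_sbell -rmorphB -/z z_pk mulrC.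
Qed.
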